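(* Let $g:[0,1]\to[0,1]$ be a continuous piecewise linear unimodal map and let $f(x)=1-|1-2x|$ be the tent map. Suppose there is a piecewise linear homeomorphism $h:[0,1]\to[0,1]$ with $h\circ f=g\circ h$. Then $g$ is linear on some interval $[0,\delta]$, $\delta>0$, with slope $2$, i.e. $g'(0)=2$.
   Context: A map $g:[0,1]\to[0,1]$ is called unimodal if there is $v\in(0,1)$ such that $g$ is increasing on $[0,v]$, decreasing on $[v,1]$, and $g(0)=g(1)=0$, $g(v)=1$. Piecewise linear means continuous with finitely many points of non-differentiability (kinks). *)

From Stdlib Require Import Reals Lra.
Open Scope R_scope.

Definition tent (x : R) : R := 1 - Rabs (1 - 2 * x).

(* Piecewise linear on [0,1]: there is a finite partition
   0 = p 0 < p 1 < ... < p n = 1 such that the map is affine on each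
   closed piece [p i, p (i+1)].  (Affine on adjacent closed pieces
   implies continuity on [0,1], with finitely many kinks.) *)
Definition piecewise_linear01 (g : R -> R) : Prop :=
  exists (n : nat) (p : nat -> R),
    p 0%nat = 0 /\ p n = 1 /\
    (forall i, (i < n)%nat -> p i < p (S i)) /\
    (forall i, (i < n)%nat -> exists a b : R,
       forall x, p i <= x <= p (S i) -> g x = a * x + b).

Definition maps01 (g : R -> R) : Prop :=
  forall x, 0 <= x <= 1 -> 0 <= g x <= 1.

Definition unimodal01 (g : R -> R) : Prop :=
  exists v : R, 0 < v < 1 /\
    (forall x y, 0 <= x <= y -> y <= v -> g x <= g y) /\
    (forall x y, v <= x <= y -> y <= 1 -> g y <= g x) /\
    g 0 = 0 /\ g 1 = 0 /\ g v = 1.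

Definition homeo01 (h : R -> R) : Prop :=
  maps01 h /\
  (forall x, 0 <= x <= 1 -> continuity_pt h x) /\
  exists k : R -> R, maps01 k /\
    (forall y, 0 <= y <= 1 -> continuity_pt k y) /\
    (forall x, 0 <= x <= 1 -> k (h x) = x) /\
    (forall y, 0 <= y <= 1 -> h (k y) = y).

From Stdlib Require Import Reals Ranalysis5 Lra Lia.
Open Scope R_scope.

(* Near 0 both maps are affine: g x = g 0 + a x on
   some [0,q] and h x = h 0 + c x on some [0,e].  A homeomorphism of [0,1]
   sends 0 to an endpoint (otherwise the intermediate value theorem would
   produce a second preimage of h 0), and since tent 0 = 0 the conjugacy
   makes h 0 a fixed point of g; as g 1 = 0, this forces h 0 = 0, and then
   g 0 = 0 too.  Injectivity and h [0,1] ⊆ [0,1] give c > 0.  For small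
   x > 0 we have tent x = 2x, so the conjugacy reads 2 c x = h (2x) = g (c x)
   = a c x, whence a = 2.
   The file first proves the general facts (first affine piece, a strict
   intermediate value theorem, injectivity and the endpoint property of
   homeomorphisms of [0,1]), then the slope comparison, then the theorem. *)

Lemma first_affine_piece (g : R -> R) : piecewise_linear01 g ->
  exists e a, 0 < e <= 1 /\ forall x, 0 <= x <= e -> g x = g 0 + a * x.
Proof.
  intros [n [p [Hp0 [Hpn [Hinc Haff]]]]].
  destruct n as [|n]; [lra|].
  destruct (Haff 0%nat ltac:(lia)) as [a [b Hab]].
  assert (Hp1 := Hinc 0%nat ltac:(lia)).
  assert (Hg0 : g 0 = b) by (rewrite (Hab 0) by lra; ring).
  exists (Rmin (p 1%nat) 1), a. split.
  - split; [apply Rmin_glb_lt; lra | apply Rmin_r].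
  - intros x Hx. pose proof (Rmin_l (p 1%nat) 1).
    rewrite Hg0, (Hab x) by lra. ring.
Qed.

Lemma IVT_between (f : R -> R) (a b y : R) :
  (forall t, a <= t <= b -> continuity_pt f t) -> a < b ->
  (f a - y) * (f b - y) < 0 -> exists w, a <= w <= b /\ f w = y.
Proof.
  intros Cf Hab Hsign.
  destruct (Rlt_le_dec (f a) y) as [Hlt | Hge].
  - assert (Hb : 0 < f b - y) by nra.
    assert (Cfy : forall t, a <= t <= b -> continuity_pt (fun t => f t - y) t).
    { intros t Ht. apply continuity_pt_minus; [now apply Cf|].
      apply continuity_pt_const. now intros u v. }
    destruct (IVT_interv (fun t => f t - y) a b Cfy Hab ltac:(lra) Hb)
      as [w [Hw Hfw]].
    exists w. split; [exact Hw | lra].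
  - assert (Ha : y < f a) by (destruct Hge as [Hgt | Heq]; [exact Hgt | subst; nra]).
    assert (Hb : f b - y < 0) by nra.
    assert (Cyf : forall t, a <= t <= b -> continuity_pt (fun t => y - f t) t).
    { intros t Ht. apply continuity_pt_minus; [|now apply Cf].
      apply continuity_pt_const. now intros u v. }
    destruct (IVT_interv (fun t => y - f t) a b Cyf Hab ltac:(lra) ltac:(lra))
      as [w [Hw Hfw]].
    exists w. split; [exact Hw | lra].
Qed.

Lemma homeo01_injective (h : R -> R) (x y : R) : homeo01 h ->
  0 <= x <= 1 -> 0 <= y <= 1 -> h x = h y -> x = y.
Proof.
  intros [_ [_ [k [_ [_ [Hkh _]]]]]] Hx Hy Hxy.
  rewrite <- (Hkh x Hx), <- (Hkh y Hy), Hxy. reflexivity.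
Qed.

(* A homeomorphism of [0,1] sends 0 to an endpoint: were h 0 interior, a
   value y on the side of h 0 opposite to h 1 has a preimage z > 0, and h
   would take the value h 0 again between z and 1. *)
Lemma homeo01_zero_endpoint (h : R -> R) : homeo01 h -> h 0 = 0 \/ h 0 = 1.
Proof.
  intros Hh. pose proof Hh as [Mh [Ch [k [Mk [_ [_ Hhk]]]]]].
  destruct (Mh 0 ltac:(lra)) as [Hd0 Hd1].
  destruct (Req_dec (h 0) 0) as [E|E]; [now left|].
  destruct (Req_dec (h 0) 1) as [E'|E']; [now right|]. exfalso.
  assert (Hd : 0 < h 0 < 1) by lra.
  assert (H1 : h 1 <> h 0)
    by (intro H; apply (homeo01_injective h 1 0 Hh) in H; lra).
  set (y := if Rlt_dec (h 0) (h 1) then h 0 / 2 else (h 0 + 1) / 2).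
  assert (Hy : 0 <= y <= 1) by (unfold y; destruct Rlt_dec; lra).
  assert (Hside : (y - h 0) * (h 1 - h 0) < 0).
  { unfold y; destruct Rlt_dec as [Hlt | Hge]; [nra|].
    assert (h 1 < h 0) by lra. nra. }
  set (z := k y). pose proof (Mk y Hy) as Hz. fold z in Hz.
  assert (Hhz : h z = y) by now apply Hhk.
  assert (Hz0 : z <> 0) by (intro Z; rewrite Z in Hhz; subst y; nra).
  assert (Hz1 : z <> 1) by (intro Z; rewrite Z in Hhz; subst y; nra).
  destruct (IVT_between h z 1 (h 0)) as [w [Hw Hhw]].
  - intros t Ht. apply Ch. lra.
  - lra.
  - rewrite Hhz. exact Hside.
  - apply (homeo01_injective h w 0 Hh) in Hhw; lra.
Qed.

(* Under the conjugacy, h 0 is a fixed point of g (tent 0 = 0); since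
   g 1 = 0, the endpoint h 0 must be 0. *)
Lemma conjugacy_fixes_zero (g h : R -> R) : homeo01 h -> g 1 = 0 ->
  (forall x, 0 <= x <= 1 -> h (tent x) = g (h x)) -> h 0 = 0.
Proof.
  intros Hh Hg1 Hconj.
  assert (Ht0 : tent 0 = 0) by (unfold tent; rewrite Rabs_right; lra).
  pose proof (Hconj 0 ltac:(lra)) as H0. rewrite Ht0 in H0.
  destruct (homeo01_zero_endpoint h Hh) as [E|E]; [exact E|].
  rewrite E, Hg1 in H0. lra.
Qed.

Lemma homeo01_slope_pos (h : R -> R) (e c : R) : homeo01 h -> 0 < e <= 1 ->
  (forall x, 0 <= x <= e -> h x = c * x) -> 0 < c.
Proof.
  intros Hh He Hc.
  assert (Hc0 : c <> 0).
  { intro C. assert (Heq : h e = h 0) by (rewrite !Hc by lra; rewrite C; ring).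
    apply (homeo01_injective h e 0 Hh) in Heq; lra. }
  destruct Hh as [Mh _]. destruct (Mh e ltac:(lra)) as [Hhe _].
  rewrite Hc in Hhe by lra. nra.
Qed.

Lemma conjugacy_slope_two (g h : R -> R) (q a e c : R) :
  0 < q -> 0 < e <= 1 -> 0 < c ->
  (forall x, 0 <= x <= q -> g x = a * x) ->
  (forall x, 0 <= x <= e -> h x = c * x) ->
  (forall x, 0 <= x <= 1 -> h (tent x) = g (h x)) -> a = 2.
Proof.
  intros Hq He Hc Hga Hhc Hconj.
  set (x := Rmin (e / 2) (q / (2 * c))).
  assert (Hxe : x <= e / 2) by apply Rmin_l.
  assert (Hx0 : 0 < x)
    by (apply Rmin_glb_lt; [lra | apply Rdiv_lt_0_compat; lra]).
  assert (Hcx : c * x <= q / 2).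
  { assert (Hxq : x <= q / (2 * c)) by apply Rmin_r.
    apply Rmult_le_compat_l with (r := c) in Hxq; [|lra].
    replace (c * (q / (2 * c))) with (q / 2) in Hxq by (field; lra). lra. }
  assert (Htx : tent x = 2 * x) by (unfold tent; rewrite Rabs_right; lra).
  pose proof (Hconj x ltac:(lra)) as HC.
  rewrite Htx, (Hhc (2 * x)), (Hhc x), Hga in HC by nra.
  assert (Hcx0 : 0 < c * x) by nra.
  apply (Rmult_eq_reg_r (c * x)); lra.
Qed.

Theorem lemma3p21 (g h : R -> R) :
  maps01 g -> piecewise_linear01 g -> unimodal01 g ->
  piecewise_linear01 h -> homeo01 h ->
  (forall x, 0 <= x <= 1 -> h (tent x) = g (h x)) ->
  exists delta : R, 0 < delta <= 1 /\
    (forall x, 0 <= x <= delta -> g x = 2 * x).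
Proof.
  intros _ PLg [_ [_ [_ [_ [Hg0 [Hg1 _]]]]]] PLh Hh Hconj.
  destruct (first_affine_piece g PLg) as [q [a [Hq Hga]]].
  destruct (first_affine_piece h PLh) as [e [c [He Hhc]]].
  assert (Hh0 : h 0 = 0) by exact (conjugacy_fixes_zero g h Hh Hg1 Hconj).
  rewrite Hg0 in Hga. rewrite Hh0 in Hhc.
  assert (Hga' : forall x, 0 <= x <= q -> g x = a * x)
    by (intros x Hx; rewrite Hga by exact Hx; ring).
  assert (Hhc' : forall x, 0 <= x <= e -> h x = c * x)
    by (intros x Hx; rewrite Hhc by exact Hx; ring).
  assert (Hc : 0 < c) by exact (homeo01_slope_pos h e c Hh He Hhc').
  assert (Ha : a = 2)
    by exact (conjugacy_slope_two g h q a e c ltac:(lra) He Hc Hga' Hhc' Hconj).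
  exists q. split; [exact Hq|]. intros x Hx. rewrite Hga' by exact Hx. now rewrite Ha.
Qed.
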